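(* For an auto-regressive generative model producing its output over $R$ rounds with per-round models $h_1,\dots,h_R$, the cumulative error satisfies \[ L(h_R) := \sum_{r=1}^{R}\lambda_r L_{r}(h_{r}) \leq \sum_{i=1}^R \Lambda_i \left( \hat{L}_{m,i}(h_{i}) + \epsilon_i \right), \] where $G_{r,i}=\lambda_r\prod_{j=i+1}^{r}\gamma_j$ and $\Lambda_i=\sum_{r=i}^{R}G_{r,i}$.
   Context: For round $r$, $L_r(h_r)=\mathbb{E}_{(x^{(r)},y^{(r)})\sim\mathcal{D}^{(r)}}[\ell(h_r(x^{(r)}),y^{(r)})]$ is the expected loss of the round-$r$ output with respect to the expected output, $\hat{L}_{m,r}(h_r)$ is the empirical loss computed on $m$ samples, and $\epsilon_r\ge0$ is the generalization term of round $r$. The constants $\gamma_r\ge 0$ quantify the impact of errors from round $r-1$ on round $r$, in the sense that $L_r(h_r)\le \hat{L}_{m,r}(h_r)+\epsilon_r+\gamma_r L_{r-1}(h_{r-1})$ for each $r$ (with no previous-round term for $r=1$). The weights $\lambda_r\ge 0$ satisfy $\sum_{r=1}^R\lambda_r=1$. Empty products equal $1$. *)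

From mathcomp Require Import all_boot all_order all_algebra.
Set Implicit Arguments. Unset Strict Implicit. Unset Printing Implicit Defensive.
Import Order.TTheory GRing.Theory Num.Theory.
Local Open Scope ring_scope.

(* Rounds are indexed by natural numbers 1..R. *)

Definition Gcoef (R : realFieldType) (lam gam : nat -> R) (r i : nat) : R :=
  lam r * \prod_(i.+1 <= j < r.+1) gam j.

Definition Lam (R : realFieldType) (Rn : nat) (lam gam : nat -> R) (i : nat) : R :=
  \sum_(i <= r < Rn.+1) Gcoef lam gam r i.

From mathcomp Require Import all_boot all_order all_algebra.
Import Order.TTheory GRing.Theory Num.Theory.
Local Open Scope ring_scope.

(* Unrolling the recursion L_r <= a_r + gamma_r L_{r-1} bounds each L_r by
   sum_{i <= r} (prod_{j = i+1}^{r} gamma_j) a_i, with a_i = Lhat_i + eps_i.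
   Weighting by lambda_r >= 0 and exchanging the two sums over i <= r gives
   exactly sum_i Lambda_i a_i. *)

Definition unrolled_bound {R : realFieldType} (g a : nat -> R) (r : nat) : R :=
  \sum_(1 <= i < r.+1) (\prod_(i.+1 <= j < r.+1) g j) * a i.

Lemma unrolled_boundS {R : realFieldType} (g a : nat -> R) (r : nat) :
  unrolled_bound g a r.+1 = g r.+1 * unrolled_bound g a r + a r.+1.
Proof.
rewrite /unrolled_bound big_nat_recr //= [X in _ + X * _]big_geq // mul1r.
congr (_ + _); rewrite big_distrr /=; apply: eq_big_nat => i /andP [_ lt_ir].
by rewrite big_nat_recr //= mulrA [g _ * _]mulrC.
Qed.

Lemma le_unrolled_bound {R : realFieldType} {n : nat} (x a : nat -> R)
    {g : nat -> R} :
    (forall r, (1 <= r <= n)%N -> 0 <= g r) ->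
    ((1 <= n)%N -> x 1%N <= a 1%N) ->
    (forall r, (2 <= r <= n)%N -> x r <= a r + g r * x r.-1) ->
  forall r, (1 <= r <= n)%N -> x r <= unrolled_bound g a r.
Proof.
move=> g_ge0 x1_le x_le; elim=> [//|[_ /andP [_ le1n]|r IHr]].
  by rewrite /unrolled_bound big_nat1 big_geq // mul1r; exact: x1_le.
move=> /andP [_ lt_rn]; rewrite unrolled_boundS addrC.
apply: le_trans (x_le r.+2 _) _; first by rewrite lt_rn.
rewrite lerD2l ler_wpM2l ?IHr ?g_ge0 //= ?lt_rn //.
exact: ltnW lt_rn.
Qed.

Lemma sum_mul_unrolled_bound {R : realFieldType} (n : nat) (lam g a : nat -> R) :
  \sum_(1 <= r < n.+1) lam r * unrolled_bound g a r
  = \sum_(1 <= i < n.+1) Lam n lam g i * a i.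
Proof.
elim: n => [|n IHn]; first by rewrite !big_geq.
rewrite big_nat_recr //= IHn [RHS]big_nat_recr //= /Lam big_nat1.
rewrite /unrolled_bound big_distrr [X in _ + X]big_nat_recr //= addrA.
congr (_ + _); last by rewrite /Gcoef mulrA.
rewrite -big_split /=; apply: eq_big_nat => i /andP [_ le_in].
rewrite [X in _ = X * _]big_nat_recr /=; last exact: ltnW le_in.
by rewrite mulrDl /Gcoef mulrA.
Qed.

Theorem theorem6p2 (R : realFieldType) (Rn : nat)
    (L Lhat eps gam lam : nat -> R)
    (heps : forall r, (1 <= r <= Rn)%N -> 0 <= eps r)
    (hgam : forall r, (1 <= r <= Rn)%N -> 0 <= gam r)
    (hlam : forall r, (1 <= r <= Rn)%N -> 0 <= lam r)
    (hlam1 : \sum_(1 <= r < Rn.+1) lam r = 1)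
    (hround1 : (1 <= Rn)%N -> L 1%N <= Lhat 1%N + eps 1%N)
    (hround : forall r, (2 <= r <= Rn)%N ->
       L r <= Lhat r + eps r + gam r * L r.-1) :
  \sum_(1 <= r < Rn.+1) lam r * L r
    <= \sum_(1 <= i < Rn.+1) Lam Rn lam gam i * (Lhat i + eps i).
Proof.
rewrite -sum_mul_unrolled_bound; apply: ler_sum_nat => r /andP [le1r lt_rn].
have r_in : (1 <= r <= Rn)%N by rewrite le1r -ltnS.
rewrite ler_wpM2l ?hlam //.
exact: (le_unrolled_bound L (fun i => Lhat i + eps i) hgam hround1 hround).
Qed.
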